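(* For $n\ge2$ and all $P,Q\in\Gamma_n$, $D_{\Psi\Delta}(P\|Q)\le \frac65 D_{\Psi I}(P\|Q)$.
   Context: $\Gamma_n=\{P=(p_1,\dots,p_n): p_i>0,\ \sum p_i=1\}$. $\Delta(P\|Q)=\sum_{i=1}^n\frac{(p_i-q_i)^2}{p_i+q_i}$; $\Psi(P\|Q)=\sum_{i=1}^n\frac{(p_i-q_i)^2(p_i+q_i)}{p_iq_i}$; $I(P\|Q)=\frac12\Big[\sum_{i=1}^n p_i\ln\frac{2p_i}{p_i+q_i}+\sum_{i=1}^n q_i\ln\frac{2q_i}{p_i+q_i}\Big]$. $D_{\Psi\Delta}=\frac1{16}\Psi-\frac14\Delta$, $D_{\Psi I}=\frac1{16}\Psi-I$. *)

From Stdlib Require Import Reals.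
Open Scope R_scope.

Fixpoint sumn (n : nat) (f : nat -> R) : R :=
  match n with O => 0 | S m => sumn m f + f m end.

Definition Gamma (n : nat) (P : nat -> R) : Prop :=
  (forall i, (i < n)%nat -> 0 < P i) /\ sumn n P = 1.

Definition Delta (n : nat) (P Q : nat -> R) : R :=
  sumn n (fun i => (P i - Q i)^2 / (P i + Q i)).

Definition Psi (n : nat) (P Q : nat -> R) : R :=
  sumn n (fun i => (P i - Q i)^2 * (P i + Q i) / (P i * Q i)).

Definition Ient (n : nat) (P Q : nat -> R) : R :=
  / 2 * (sumn n (fun i => P i * ln (2 * P i / (P i + Q i)))
         + sumn n (fun i => Q i * ln (2 * Q i / (P i + Q i)))).

Definition D_PsiDelta (n : nat) (P Q : nat -> R) : R :=
  / 16 * Psi n P Q - / 4 * Delta n P Q.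

Definition D_PsiI (n : nat) (P Q : nat -> R) : R :=
  / 16 * Psi n P Q - Ient n P Q.

(** Each summand of [6/5 D_PsiI - D_PsiDelta] is [gap p q], which is homogeneous of
    degree one and equals [(p + q) phi ((p - q)/(p + q))]. On ]-1, 1[ the even function
    [phi] satisfies [phi 0 = phi' 0 = 0] and [phi'' >= 0], hence [phi >= 0]. *)
From Pilot Require Import Defs.
From Stdlib Require Import Reals Lra Lia.
From Coquelicot Require Import Coquelicot.
Open Scope R_scope.

Lemma sumn_nonneg (n : nat) (f : nat -> R) :
  (forall i, (i < n)%nat -> 0 <= f i) -> 0 <= sumn n f.
Proof.
  induction n as [|n IHn]; simpl; intros Hf; [lra|].
  assert (0 <= f n) by (apply Hf; lia).
  assert (0 <= sumn n f) by (apply IHn; intros; apply Hf; lia).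
  lra.
Qed.

Lemma derivative_nonneg_le (f f' : R -> R) (a b : R) :
  (forall x, a <= x < b -> derivable_pt_lim f x (f' x)) ->
  (forall x, a <= x < b -> 0 <= f' x) ->
  forall x, a <= x < b -> f a <= f x.
Proof.
  intros Hder Hpos x Hx.
  destruct (Req_dec x a) as [->|Hxa]; [lra|].
  destruct (MVT_cor2 f f' a x) as [c [Hmvt Hc]]; [lra| intros; apply Hder; lra|].
  assert (0 <= f' c) by (apply Hpos; lra).
  nra.
Qed.

Definition phi (x : R) : R :=
  x^2 / (20 * (1 - x^2)) + x^2 / 4 - 3/10 * ((1 + x) * ln (1 + x) + (1 - x) * ln (1 - x)).

Definition phi' (x : R) : R :=
  x / (10 * (1 - x^2)^2) + x / 2 - 3/10 * (ln (1 + x) - ln (1 - x)).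

Definition phi'' (x : R) : R := x^4 * (9 - 5 * x^2) / (10 * (1 - x^2)^3).

Lemma phi_derivative (x : R) : -1 < x < 1 -> derivable_pt_lim phi x (phi' x).
Proof.
  intros Hx. assert (0 < 1 - x^2) by nra.
  apply is_derive_Reals. unfold phi, phi'.
  auto_derive.
  - repeat split; try lra; apply Rgt_not_eq; nra.
  - replace (1 + - x) with (1 - x) by ring.
    field; repeat split; try lra; apply Rgt_not_eq; nra.
Qed.

Lemma phi'_derivative (x : R) : -1 < x < 1 -> derivable_pt_lim phi' x (phi'' x).
Proof.
  intros Hx. assert (0 < 1 - x^2) by nra.
  apply is_derive_Reals. unfold phi', phi''.
  auto_derive.
  - repeat split; try lra; apply Rgt_not_eq; nra.
  - field; repeat split; try lra; apply Rgt_not_eq; nra.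
Qed.

Lemma phi''_nonneg (x : R) : -1 < x < 1 -> 0 <= phi'' x.
Proof.
  intros Hx. assert (0 < 1 - x^2) by nra.
  unfold phi''. apply Rmult_le_pos.
  - apply Rmult_le_pos; nra.
  - apply Rlt_le, Rinv_0_lt_compat, Rmult_lt_0_compat; [lra | apply pow_lt; lra].
Qed.

Lemma phi'_nonneg (x : R) : 0 <= x < 1 -> 0 <= phi' x.
Proof.
  intros Hx.
  replace 0 with (phi' 0) by (unfold phi'; rewrite Rplus_0_r, Rminus_0_r, ln_1; field).
  apply (derivative_nonneg_le phi' phi'' 0 1); [| |exact Hx];
    intros; [apply phi'_derivative | apply phi''_nonneg]; lra.
Qed.

Lemma phi_nonneg_pos (x : R) : 0 <= x < 1 -> 0 <= phi x.
Proof.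
  intros Hx.
  replace 0 with (phi 0) by (unfold phi; rewrite Rplus_0_r, Rminus_0_r, ln_1; field).
  apply (derivative_nonneg_le phi phi' 0 1); [| |exact Hx];
    intros; [apply phi_derivative; lra | apply phi'_nonneg; lra].
Qed.

Lemma phi_opp (x : R) : phi (- x) = phi x.
Proof.
  unfold phi. replace (1 + - x) with (1 - x) by ring.
  replace (1 - - x) with (1 + x) by ring.
  replace ((- x)^2) with (x^2) by ring. ring.
Qed.

Lemma phi_nonneg (x : R) : -1 < x < 1 -> 0 <= phi x.
Proof.
  intros Hx. destruct (Rle_dec 0 x).
  - apply phi_nonneg_pos; lra.
  - rewrite <- phi_opp. apply phi_nonneg_pos; lra.
Qed.

Definition gap (p q : R) : R :=
  6/5 * (/16 * ((p - q)^2 * (p + q) / (p * q))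
         - /2 * (p * ln (2 * p / (p + q)) + q * ln (2 * q / (p + q))))
  - (/16 * ((p - q)^2 * (p + q) / (p * q)) - /4 * ((p - q)^2 / (p + q))).

Lemma gap_homogeneous (p q : R) :
  0 < p -> 0 < q -> gap p q = (p + q) * phi ((p - q) / (p + q)).
Proof.
  intros Hp Hq. unfold gap, phi.
  replace (1 + (p - q) / (p + q)) with (2 * p / (p + q)) by (field; lra).
  replace (1 - (p - q) / (p + q)) with (2 * q / (p + q)) by (field; lra).
  field. repeat split; try lra; apply Rgt_not_eq; nra.
Qed.

Lemma gap_nonneg (p q : R) : 0 < p -> 0 < q -> 0 <= gap p q.
Proof.
  intros Hp Hq. rewrite gap_homogeneous by assumption.
  apply Rmult_le_pos; [lra|].
  apply phi_nonneg.
  assert (Hx : (p - q) / (p + q) * (p + q) = p - q) by (field; lra).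
  split; nra.
Qed.

Lemma D_PsiI_D_PsiDelta_gap (n : nat) (P Q : nat -> R) :
  6/5 * D_PsiI n P Q - D_PsiDelta n P Q = sumn n (fun i => gap (P i) (Q i)).
Proof.
  unfold D_PsiI, D_PsiDelta, Ient, Psi, Defs.Delta.
  induction n as [|n IHn]; cbn [sumn]; [ring|].
  rewrite <- IHn. unfold gap. ring.
Qed.

Theorem proposition5p10 (n : nat) (P Q : nat -> R) :
  (2 <= n)%nat -> Gamma n P -> Gamma n Q ->
  D_PsiDelta n P Q <= 6 / 5 * D_PsiI n P Q.
Proof.
  intros _ [HP _] [HQ _].
  assert (Hsum : 0 <= sumn n (fun i => gap (P i) (Q i)))
    by (apply sumn_nonneg; intros i Hi; apply gap_nonneg; auto).
  rewrite <- D_PsiI_D_PsiDelta_gap in Hsum. lra.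
Qed.
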